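(* Let $\varphi=(\mathfrak f_1,\dots,\mathfrak f_r)$ be a flag with $r>1$ and $\mathfrak g\notin\varphi$, and fix either version $B=X$ or $B=D$. Then the butterfly $B[\varphi]$ is the join of $B[\mathfrak f_1]$ and the simplex $/(\mathfrak f_2,\dots,\mathfrak f_r)/$: two closed segments joining a point of $B[\mathfrak f_1]$ to a point of $/(\mathfrak f_2,\dots,\mathfrak f_r)/$ can intersect only at their endpoints, so that the map $(x,\kappa,y)\mapsto(1-\kappa)x+\kappa y$ from the topological join $/(\mathfrak f_2,\dots,\mathfrak f_r)/ * B[\mathfrak f_1]$ onto $B[\varphi]$ is a homeomorphism.
   Context: $\mathfrak g$ is the Lie algebra of a compact Lie group with Euclidean inner product $Q$ satisfying $Q([X,Y],Z)=Q(X,[Y,Z])$; linear operators are symmetric if $Q(AX,Y)=Q(X,AY)$. For symmetric $A$ and $a\in\mathbb R$, $F_a$ is the span of eigenvectors with eigenvalue $\le a$; $A$ is filtering if $[F_a,F_b]\subseteq F_{a+b}$ for all $a,b$; $\mathfrak F_+$ is the set of filtering symmetric operators with nonnegative spectrum and trace $1$. $\mathfrak h\subsetneq\mathfrak g$ is a fixed subalgebra, $\mathcal A$ a compact group of automorphisms of $\mathfrak g$ preserving $\mathfrak h$ and $Q$. For an $\mathcal A$-invariant subalgebra $\mathfrak k$ with $\mathfrak h\subsetneq\mathfrak k\subsetneq\mathfrak g$: $\bar\chi^{\mathfrak k}=\frac{1}{\dim(\mathfrak g/\mathfrak k)}(1_{\mathfrak g}-1_{\mathfrak k})$; $D[\mathfrak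 k]$ is the set of symmetric operators with nonnegative spectrum and trace $1$ commuting with all elements of $\mathcal A$, annihilating $\mathfrak k$ and commuting with $\mathrm{ad}(X)$, $X\in\mathfrak k$; $X[\mathfrak k]=D[\mathfrak k]\cap\mathfrak F_+$. A flag is a sequence $\varphi=(\mathfrak f_1,\dots,\mathfrak f_r)$, $r\ge1$, of $\mathcal A$-invariant subalgebras with $\mathfrak g\supseteq\mathfrak f_1\supsetneq\dots\supsetneq\mathfrak f_r\supsetneq\mathfrak h$; for a flag not containing $\mathfrak g$, $/\varphi/$ is the convex hull of $\{\bar\chi^{\mathfrak f_i}\}$. Butterflies ($B=X$ or $B=D$): if $r>1$ and $\mathfrak f_1\ne\mathfrak g$, $B[\varphi]$ is the union of all closed segments joining a point of $B[\mathfrak f_1]$ to a point of $/(\mathfrak f_2,\dots,\mathfrak f_r)/$. *)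

From HB Require Import structures.
From mathcomp Require Import all_boot all_order all_algebra.
From mathcomp Require Import all_classical all_reals all_analysis.
Set Implicit Arguments. Unset Strict Implicit. Unset Printing Implicit Defensive.
Import Order.TTheory GRing.Theory Num.Theory.
Import numFieldNormedType.Exports.
Local Open Scope ring_scope.
Local Open Scope classical_set_scope.

(* The Lie algebra g is modelled as R^n, i.e. row vectors 'rV[R]_n; linear
   operators are n x n matrices acting on the right (x |-> x *m M).
   Subspaces (subalgebras) are represented by matrices through their row
   space (mxalgebra, scope %MS); g itself is 1%:M. *)

Section Defs.
Variables (R : realType) (n : nat).
Local Notation vec := 'rV[R]_n.
Local Notation op := 'M[R]_n.

Definition qform (Q : op) (x y : vec) : R := (x *m Q *m y^T) 0 0.

Definition is_inner (Q : op) : Prop :=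
  Q^T = Q /\ forall x : vec, x != 0 -> 0 < qform Q x x.

Definition lie_bracket (br : vec -> vec -> vec) : Prop :=
  [/\ forall (a : R) x y z, br (a *: x + y) z = a *: br x z + br y z,
      forall x y, br x y = - br y x
    & forall x y z, br x (br y z) + br y (br z x) + br z (br x y) = 0].

Definition ad_invariant (Q : op) (br : vec -> vec -> vec) : Prop :=
  forall x y z, qform Q (br x y) z = qform Q x (br y z).

Definition subalgebra (br : vec -> vec -> vec) (S : op) : Prop :=
  forall x y : vec, (x <= S)%MS -> (y <= S)%MS -> (br x y <= S)%MS.

Definition aut_group (Q : op) (br : vec -> vec -> vec) (h : op) (A : set op)
  : Prop :=
  A 1%:M /\
  (forall a b, A a -> A b -> A (a *m b)) /\
  (forall a, A a -> a \in unitmx /\ A (invmx a)) /\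
  (forall a, A a -> forall x y, br (x *m a) (y *m a) = br x y *m a) /\
  (forall a, A a -> forall x y, qform Q (x *m a) (y *m a) = qform Q x y) /\
  (forall a, A a -> (h *m a <= h)%MS) /\
  compact A.

Definition A_invariant (A : set op) (S : op) : Prop :=
  forall a, A a -> (S *m a <= S)%MS.

Definition symmetric_op (Q : op) (M : op) : Prop :=
  forall x y, qform Q (x *m M) y = qform Q x (y *m M).

Definition nonneg_spectrum (M : op) : Prop :=
  forall (l : R) (v : vec), v != 0 -> v *m M = l *: v -> 0 <= l.

Definition in_F (M : op) (a : R) (x : vec) : Prop :=
  exists (m : nat) (c : 'I_m -> R) (v : 'I_m -> vec) (l : 'I_m -> R),
    (forall i, [/\ v i != 0, v i *m M = l i *: v i & l i <= a]) /\
    x = \sum_(i < m) c i *: v i.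

Definition filtering (br : vec -> vec -> vec) (M : op) : Prop :=
  forall a b x y, in_F M a x -> in_F M b y -> in_F M (a + b) (br x y).

Definition Fplus (Q : op) (br : vec -> vec -> vec) (M : op) : Prop :=
  [/\ symmetric_op Q M, nonneg_spectrum M, \tr M = 1 & filtering br M].

Definition Dset (Q : op) (br : vec -> vec -> vec) (A : set op) (k : op)
  (M : op) : Prop :=
  symmetric_op Q M /\ nonneg_spectrum M /\ \tr M = 1 /\
  (forall a, A a -> a *m M = M *m a) /\
  (forall x : vec, (x <= k)%MS -> x *m M = 0) /\
  (forall X : vec, (X <= k)%MS -> forall Y, br X (Y *m M) = br X Y *m M).

Definition Xset (Q : op) (br : vec -> vec -> vec) (A : set op) (k : op)
  (M : op) : Prop := Dset Q br A k M /\ Fplus Q br M.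

Definition Bset (isX : bool) (Q : op) (br : vec -> vec -> vec) (A : set op)
  (k : op) : set op :=
  fun M => if isX then Xset Q br A k M else Dset Q br A k M.

(* 1_k : the Q-orthogonal projection onto k (identity on k, zero on its
   Q-orthogonal complement). *)
Definition proj (Q : op) (S : op) : op :=
  Q *m (row_base S)^T *m invmx (row_base S *m Q *m (row_base S)^T)
    *m row_base S.

Definition chibar (Q : op) (k : op) : op :=
  ((n - \rank k)%:R)^-1 *: (1%:M - proj Q k).

(* Flags are indexed 1..r : f 1 = f_1, ..., f r = f_r. *)
Definition is_flag (br : vec -> vec -> vec) (h : op) (A : set op) (r : nat)
  (f : nat -> op) : Prop :=
  (1 <= r)%N /\
  (forall i, (1 <= i <= r)%N ->
     [/\ subalgebra br (f i), A_invariant A (f i) & (h < f i)%MS]) /\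
  (forall i j, (1 <= i)%N -> (i < j)%N -> (j <= r)%N -> (f j < f i)%MS).

Definition g_not_in_flag (r : nat) (f : nat -> op) : Prop :=
  forall i, (1 <= i <= r)%N -> (f i < 1%:M)%MS.

Definition tail_simplex (Q : op) (r : nat) (f : nat -> op) : set op :=
  fun z => exists t : nat -> R,
    [/\ forall i, 0 <= t i,
        \sum_(2 <= i < r.+1) t i = 1
      & z = \sum_(2 <= i < r.+1) t i *: chibar Q (f i)].

Definition butterfly (isX : bool) (Q : op) (br : vec -> vec -> vec)
  (A : set op) (r : nat) (f : nat -> op) : set op :=
  fun z => exists x y k, [/\ Bset isX Q br A (f 1%N) x,
    tail_simplex Q r f y, 0 <= k <= 1 & z = (1 - k) *: x + k *: y].

End Defs.

From Pilot Require Import Defs.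
From HB Require Import structures.
From mathcomp Require Import all_boot all_order all_algebra.
From mathcomp Require Import all_classical all_reals all_analysis.
From mathcomp Require Import zify.
Import Order.TTheory GRing.Theory Num.Theory.
Import numFieldNormedType.Exports.
Local Open Scope ring_scope.
Local Open Scope classical_set_scope.
Set Implicit Arguments. Unset Strict Implicit.

(* Let w_j (2 <= j <= r) be a nonzero vector of f_(j-1) that is Q-orthogonal
   to f_j.  Every point of B[f_1] kills w_j, while \bar\chi^(f_i) acts on w_j
   as the scalar 1/dim(g/f_i) if j <= i and as 0 otherwise.  Hence w_j is an
   eigenvector of z = (1-k) x + k \sum_i t_i \bar\chi^(f_i) with eigenvalue
   k \sum_(i >= j) t_i/dim(g/f_i), which a Rayleigh quotient reads off
   continuously in z.  Differencing consecutive eigenvalues recovers every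
   k t_i, hence k and k y as continuous functions of z, and then x when
   k != 1: the join map has a continuous inverse. *)

Lemma cvg_big_sum (R : numFieldType) (V : normedModType R) (T : Type)
    (F : set_system T) {FF : Filter F} (I : Type) (s : seq I)
    (u : I -> T -> V) (l : I -> V) :
  (forall i, u i @ F --> l i) ->
  \sum_(i <- s) u i t @[t --> F] --> \sum_(i <- s) l i.
Proof.
move=> u_cvg; elim: s => [|i s IHs].
  by rewrite big_nil; under eq_cvg do rewrite big_nil; exact: cvg_cst.
by rewrite big_cons; under eq_cvg do rewrite big_cons; exact: cvgD.
Qed.

Section JoinCoordinates.
Variables (R : realType) (V : normedModType R) (X Y : set V)
  (K : V -> R) (E : V -> V).

Hypothesis K_join : forall x y k, X x -> Y y -> K ((1 - k) *: x + k *: y) = k.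
Hypothesis E_join :
  forall x y k, X x -> Y y -> E ((1 - k) *: x + k *: y) = k *: y.

Lemma join_inj x x' y y' k k' : X x -> X x' -> Y y -> Y y' ->
  (1 - k) *: x + k *: y = (1 - k') *: x' + k' *: y' ->
  [/\ k = k', k != 1 -> x = x' & k != 0 -> y = y'].
Proof.
move=> Xx Xx' Yy Yy' ez.
have ek : k = k' by rewrite -(K_join k Xx Yy) ez K_join.
subst k'; have eky : k *: y = k *: y' by rewrite -(E_join k Xx Yy) ez E_join.
split=> // nk; last exact: (scalerI nk eky).
apply: (scalerI (a := 1 - k)); first by rewrite subr_eq0 eq_sym.
by apply: (addIr (k *: y)); rewrite ez eky.
Qed.

Hypotheses (K_cont : continuous K) (E_cont : continuous E).

Lemma join_inv_cvg (T : Type) (F : set_system T) {FF : Filter F}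
    (xs ys : T -> V) (ks : T -> R) x y k :
  (forall t, X (xs t) /\ Y (ys t)) -> X x -> Y y ->
  (1 - ks t) *: xs t + ks t *: ys t @[t --> F] --> (1 - k) *: x + k *: y ->
  [/\ ks @ F --> k, k != 1 -> xs @ F --> x & k != 0 -> ys @ F --> y].
Proof.
move=> XYs Xx Yy zs_cvg.
set zs := fun t => _ in zs_cvg; set z := (1 - k) *: x + k *: y in zs_cvg.
have Kzs t : K (zs t) = ks t by have [Xt Yt] := XYs t; exact: K_join.
have Ezs t : E (zs t) = ks t *: ys t by have [Xt Yt] := XYs t; exact: E_join.
have ks_cvg : ks @ F --> k.
  have -> : ks = K \o zs by apply/funext=> t; rewrite /= Kzs.
  by move: (continuous_cvg FF (@K_cont z) zs_cvg); rewrite /z K_join.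
have Ezs_cvg : E (zs t) @[t --> F] --> k *: y.
  by move: (continuous_cvg FF (@E_cont z) zs_cvg); rewrite /z E_join.
split=> // nk.
- have nk1 : 1 - k != 0 by rewrite subr_eq0 eq_sym.
  have ks1_cvg : 1 - ks t @[t --> F] --> 1 - k by apply: cvgB => //; exact: cvg_cst.
  have : (1 - ks t)^-1 *: (zs t - E (zs t)) @[t --> F] --> (1 - k)^-1 *: (z - k *: y).
    by apply: cvgZ; [exact: cvgV | exact: cvgB].
  rewrite /z addrK scalerA mulVf // scale1r; apply: cvg_trans; apply: near_eq_cvg.
  near=> t; have nkt : 1 - ks t != 0 by near: t; exact: cvgr_neq0 ks1_cvg nk1.
  by rewrite Ezs /zs addrK scalerA mulVf // scale1r.
- have : (ks t)^-1 *: E (zs t) @[t --> F] --> k^-1 *: (k *: y).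
    by apply: cvgZ; [exact: cvgV | exact: Ezs_cvg].
  rewrite scalerA mulVf // scale1r; apply: cvg_trans; apply: near_eq_cvg.
  near=> t; have nkt : ks t != 0 by near: t; exact: cvgr_neq0 ks_cvg nk.
  by rewrite Ezs scalerA mulVf // scale1r.
Unshelve. all: by end_near.
Qed.

End JoinCoordinates.

Section InnerProduct.
Variables (R : realType) (n : nat) (Q : 'M[R]_n).
Hypothesis HQ : is_inner Q.

Lemma qformZl a (x y : 'rV[R]_n) : qform Q (a *: x) y = a * qform Q x y.
Proof. by rewrite /qform -!scalemxAl mxE. Qed.

Lemma qform_self_neq0 (x : 'rV[R]_n) : x != 0 -> qform Q x x != 0.
Proof. by move=> /HQ.2 /lt0r_neq0. Qed.

Lemma gram_row_base_unit (S : 'M[R]_n) :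
  row_base S *m Q *m (row_base S)^T \in unitmx.
Proof.
rewrite -row_free_unit; apply: inj_row_free => v Gv0.
have : qform Q (v *m row_base S) (v *m row_base S) = 0.
  rewrite /qform; have -> : v *m row_base S *m Q *m (v *m row_base S)^T =
            v *m (row_base S *m Q *m (row_base S)^T) *m v^T.
    by rewrite trmx_mul !mulmxA.
  by rewrite Gv0 mul0mx mxE.
apply: contra_eq => nv0; apply: qform_self_neq0.
by rewrite mulmx_free_eq0 ?row_base_free.
Qed.

Lemma proj_sub (S : 'M[R]_n) : (Defs.proj Q S <= S)%MS.
Proof. by apply: submx_trans (submxMl _ _) _; rewrite eq_row_base. Qed.

Lemma proj_id (S : 'M[R]_n) (v : 'rV[R]_n) : (v <= S)%MS -> v *m Defs.proj Q S = v.
Proof.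
rewrite -(eq_row_base S) => /submxP [D ->]; rewrite /Defs.proj.
set B := row_base S; set G := B *m Q *m B^T.
have -> : D *m B *m (Q *m B^T *m invmx G *m B) = D *m G *m invmx G *m B.
  by rewrite /G !mulmxA.
by rewrite mulmxK // gram_row_base_unit.
Qed.

Lemma proj_eq0_submx (S T : 'M[R]_n) (v : 'rV[R]_n) :
  v *m Defs.proj Q S = 0 -> (T <= S)%MS -> v *m Defs.proj Q T = 0.
Proof.
move=> vS0 TS; have vQB0 : v *m Q *m (row_base S)^T = 0.
  have : v *m Q *m (row_base S)^T *m
      invmx (row_base S *m Q *m (row_base S)^T) *m row_base S = 0.
    by rewrite -vS0 /Defs.proj !mulmxA.
  move/eqP; rewrite (mulmx_free_eq0 _ (row_base_free S)) => /eqP {}vS0.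
  by rewrite -[LHS]mulmx1 -(mulVmx (gram_row_base_unit S)) mulmxA vS0 mul0mx.
have /submxP [D BTD] : (row_base T <= row_base S)%MS by rewrite !eq_row_base.
rewrite /Defs.proj; set G := invmx _; rewrite BTD trmx_mul.
have -> : v *m (Q *m ((row_base S)^T *m D^T) *m G *m (D *m row_base S)) =
          v *m Q *m (row_base S)^T *m (D^T *m G *m (D *m row_base S)).
  by rewrite !mulmxA.
by rewrite vQB0 mul0mx.
Qed.

Lemma exists_proj_orth (S T : 'M[R]_n) : (T < S)%MS ->
  exists w : 'rV[R]_n, [/\ w != 0, (w <= S)%MS & w *m Defs.proj Q T = 0].
Proof.
case/andP => TS /row_subPn [i uT]; set u := row i S in uT.
have puT : (u *m Defs.proj Q T <= T)%MS := submx_trans (submxMl _ _) (proj_sub T).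
exists (u - u *m Defs.proj Q T); split.
- by apply: contraNneq uT => /subr0_eq ->.
- by rewrite addmx_sub ?row_sub // eqmx_opp (submx_trans puT).
- by rewrite mulmxBl (proj_id puT) subrr.
Qed.

Lemma chibar_proj_eq0 (T : 'M[R]_n) (v : 'rV[R]_n) : v *m Defs.proj Q T = 0 ->
  v *m chibar Q T = ((n - \rank T)%:R)^-1 *: v.
Proof. by move=> vT0; rewrite -scalemxAr mulmxBr mulmx1 vT0 subr0. Qed.

Lemma chibar_sub (T : 'M[R]_n) (v : 'rV[R]_n) : (v <= T)%MS -> v *m chibar Q T = 0.
Proof. by move=> vT; rewrite -scalemxAr mulmxBr mulmx1 proj_id // subrr scaler0. Qed.

Definition rayleigh (w : 'rV[R]_n) (z : 'M[R]_n) : R :=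
  qform Q (w *m z) w / qform Q w w.

Lemma rayleigh_eigen (w : 'rV[R]_n) (z : 'M[R]_n) (s : R) :
  w != 0 -> w *m z = s *: w -> rayleigh w z = s.
Proof. by move=> w0 wz; rewrite /rayleigh wz qformZl mulfK // qform_self_neq0. Qed.

Lemma continuous_rayleigh (w : 'rV[R]_n) : continuous (rayleigh w).
Proof.
have qE z : qform Q (w *m z) w = \sum_l \sum_i (w 0 i * (Q *m w^T) l 0) * z i l.
  rewrite /qform -mulmxA mxE; apply: eq_bigr => l _.
  by rewrite mxE mulr_suml; apply: eq_bigr => i _; rewrite mulrAC.
have q_cont : continuous (fun z => qform Q (w *m z) w).
  move=> z0; rewrite (funext qE).
  apply: (cvg_big_sum (F := nbhs z0)) => l.
  apply: (cvg_big_sum (F := nbhs z0)) => i.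
  exact: (cvgMl_tmp (@coord_continuous _ n n i l z0)).
by move=> z0; exact: (cvgMr_tmp (q_cont z0)).
Qed.

End InnerProduct.

Definition annihilator (R : realType) (n : nat) (S : 'M[R]_n) : set 'M[R]_n :=
  [set x | forall v : 'rV[R]_n, (v <= S)%MS -> v *m x = 0].

Section FlagCoordinates.
Variables (R : realType) (n r : nat) (Q : 'M[R]_n) (f : nat -> 'M[R]_n)
  (w : nat -> 'rV[R]_n).
Hypothesis HQ : is_inner Q.
Hypothesis f_ltmx :
  forall i j, (1 <= i)%N -> (i < j)%N -> (j <= r)%N -> (f j < f i)%MS.
Hypothesis f_lt1 : g_not_in_flag r f.
Hypothesis w_spec : forall j, (2 <= j <= r)%N ->
  [/\ w j != 0, (w j <= f j.-1)%MS & w j *m Defs.proj Q (f j) = 0].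

Local Notation c i := ((n - \rank (f i))%:R^-1 : R).

Lemma flag_lemx i j : (1 <= i <= j)%N -> (j <= r)%N -> (f j <= f i)%MS.
Proof.
case/andP=> i1; rewrite leq_eqVlt => /predU1P [-> | ij] jr; first exact: submx_refl.
exact/ltmxW/f_ltmx.
Qed.

Lemma codim_neq0 i : (1 <= i <= r)%N -> (n - \rank (f i))%:R != 0 :> R.
Proof.
move=> ir; rewrite pnatr_eq0 subn_eq0 -ltnNge.
by move: (f_lt1 ir); rewrite ltmxErank mxrank1 => /andP [].
Qed.

Lemma w_chibar i j : (2 <= i <= r)%N -> (2 <= j <= r)%N ->
  w j *m chibar Q (f i) = (if (j <= i)%N then c i else 0) *: w j.
Proof.
move=> i2r j2r; have [_ wf1 wf0] := w_spec j2r.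
case: leqP => [ji | ij].
  by apply/chibar_proj_eq0/(proj_eq0_submx HQ wf0)/flag_lemx; lia.
by rewrite scale0r; apply/(chibar_sub HQ)/(submx_trans wf1)/flag_lemx; lia.
Qed.

Lemma w_annihilator x j : annihilator (f 1%N) x -> (2 <= j <= r)%N -> w j *m x = 0.
Proof.
move=> x0 j2r; have [_ wf1 _] := w_spec j2r.
by apply/x0/(submx_trans wf1)/flag_lemx; lia.
Qed.

Lemma w_join x k t j : annihilator (f 1%N) x -> (2 <= j <= r)%N ->
  w j *m ((1 - k) *: x + k *: \sum_(2 <= i < r.+1) t i *: chibar Q (f i)) =
  (k * \sum_(j <= i < r.+1) t i * c i) *: w j.
Proof.
move=> x0 j2r; rewrite mulmxDr -!scalemxAr w_annihilator // scaler0 add0r.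
rewrite mulmx_sumr (@big_cat_nat _ _ _ j) /=; try lia.
rewrite big_nat_cond big1 ?add0r => [|i /andP [ij _]].
  rewrite -scalerA scaler_suml; congr (_ *: _); apply: eq_big_nat => i ijr.
  have [i2r ji] : (2 <= i <= r)%N /\ (j <= i)%N by lia.
  by rewrite -scalemxAr w_chibar // ji scalerA.
have [i2r ji] : (2 <= i <= r)%N /\ (i < j)%N by lia.
by rewrite -scalemxAr w_chibar // leqNgt ji scale0r scaler0.
Qed.

(* The empty tail [j = r.+1] gets eigenvalue 0. *)
Definition tail_rayleigh (j : nat) (z : 'M[R]_n) : R :=
  if (j <= r)%N then rayleigh Q (w j) z else 0.

Definition flag_coef (i : nat) (z : 'M[R]_n) : R :=
  (n - \rank (f i))%:R * (tail_rayleigh i z - tail_rayleigh i.+1 z).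

Definition join_param (z : 'M[R]_n) : R := \sum_(2 <= i < r.+1) flag_coef i z.

Definition join_tail (z : 'M[R]_n) : 'M[R]_n :=
  \sum_(2 <= i < r.+1) flag_coef i z *: chibar Q (f i).

Lemma tail_rayleigh_join x k t j : annihilator (f 1%N) x -> (2 <= j <= r.+1)%N ->
  tail_rayleigh j ((1 - k) *: x + k *: \sum_(2 <= i < r.+1) t i *: chibar Q (f i)) =
  k * \sum_(j <= i < r.+1) t i * c i.
Proof.
move=> x0 j2r1; rewrite /tail_rayleigh; case: leqP => [jr | rj].
  have j2r : (2 <= j <= r)%N by lia.
  by have [w0 _ _] := w_spec j2r; apply: rayleigh_eigen; rewrite // w_join.
by rewrite big_geq ?mulr0.
Qed.

Lemma flag_coef_join x k t i : annihilator (f 1%N) x -> (2 <= i <= r)%N ->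
  flag_coef i ((1 - k) *: x + k *: \sum_(2 <= l < r.+1) t l *: chibar Q (f l)) =
  k * t i.
Proof.
move=> x0 i2r; have i1r : (1 <= i <= r)%N by lia.
rewrite /flag_coef !tail_rayleigh_join //; try lia.
rewrite -mulrBr [\sum_(i <= l < r.+1) _]big_ltn ?addrK; last lia.
by rewrite mulrCA [_ * (_ / _)]mulrCA mulfV ?mulr1 ?codim_neq0.
Qed.

Lemma join_param_join x y k : annihilator (f 1%N) x -> tail_simplex Q r f y ->
  join_param ((1 - k) *: x + k *: y) = k.
Proof.
move=> x0 [t [_ t1 ->]].
transitivity (k * \sum_(2 <= i < r.+1) t i); last by rewrite t1 mulr1.
rewrite mulr_sumr; apply: eq_big_nat => i i2r1; have i2r : (2 <= i <= r)%N by lia.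
by rewrite flag_coef_join.
Qed.

Lemma join_tail_join x y k : annihilator (f 1%N) x -> tail_simplex Q r f y ->
  join_tail ((1 - k) *: x + k *: y) = k *: y.
Proof.
move=> x0 [t [_ _ ->]]; rewrite /join_tail [RHS]scaler_sumr.
apply: eq_big_nat => i i2r1; have i2r : (2 <= i <= r)%N by lia.
by rewrite flag_coef_join // -scalerA.
Qed.

Lemma continuous_flag_coef i : continuous (flag_coef i).
Proof.
have tail_cont j : continuous (tail_rayleigh j).
  rewrite /tail_rayleigh; case: leqP => _; first exact: continuous_rayleigh.
  exact: cst_continuous.
move=> z; exact: (cvgMl_tmp (cvgB (tail_cont i z) (tail_cont i.+1 z))).
Qed.

Lemma continuous_join_param : continuous join_param.
Proof.
move=> z; apply: (cvg_big_sum (F := nbhs z)) => i.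
exact: continuous_flag_coef.
Qed.

Lemma continuous_join_tail : continuous join_tail.
Proof.
move=> z; apply: (cvg_big_sum (F := nbhs z)) => i.
by apply: cvgZr_tmp; exact: continuous_flag_coef.
Qed.

End FlagCoordinates.

Lemma Bset_annihilator (R : realType) (n : nat) (isX : bool) (Q : 'M[R]_n)
    (br : 'rV[R]_n -> 'rV[R]_n -> 'rV[R]_n) (A : set 'M[R]_n) (k x : 'M[R]_n) :
  Bset isX Q br A k x -> annihilator k x.
Proof. by case: isX => [[[_ [_ [_ [_ []]]]]] | [_ [_ [_ [_ []]]]]]. Qed.

Theorem lemma5p3 (R : realType) (n : nat) (Q : 'M[R]_n)
  (br : 'rV[R]_n -> 'rV[R]_n -> 'rV[R]_n) (h : 'M[R]_n) (A : set 'M[R]_n)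
  (r : nat) (f : nat -> 'M[R]_n) (isX : bool) :
  is_inner Q -> lie_bracket br -> ad_invariant Q br ->
  subalgebra br h -> (h < 1%:M)%MS -> aut_group Q br h A ->
  (1 < r)%N -> is_flag br h A r f -> g_not_in_flag r f ->
  (forall (x x' y y' : 'M[R]_n) (k k' : R),
     Bset isX Q br A (f 1%N) x -> Bset isX Q br A (f 1%N) x' ->
     tail_simplex Q r f y -> tail_simplex Q r f y' ->
     0 <= k <= 1 -> 0 <= k' <= 1 ->
     (1 - k) *: x + k *: y = (1 - k') *: x' + k' *: y' ->
     [/\ k = k', k != 1 -> x = x' & k != 0 -> y = y'])
  /\
  (forall (xs ys : nat -> 'M[R]_n) (ks : nat -> R) (x y : 'M[R]_n) (k : R),
     (forall m, [/\ Bset isX Q br A (f 1%N) (xs m), tail_simplex Q r f (ys m)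
                  & 0 <= ks m <= 1]) ->
     Bset isX Q br A (f 1%N) x -> tail_simplex Q r f y -> 0 <= k <= 1 ->
     (fun m => (1 - ks m) *: xs m + ks m *: ys m) @ \oo
        --> (1 - k) *: x + k *: y ->
     [/\ ks @ \oo --> k, k != 1 -> xs @ \oo --> x & k != 0 -> ys @ \oo --> y]).
Proof.
move=> HQ _ _ _ _ _ _ [_ [_ f_ltmx]] f_lt1.
have /choice [w w_spec] : forall j, exists w : 'rV[R]_n, (2 <= j <= r)%N ->
    [/\ w != 0, (w <= f j.-1)%MS & w *m Defs.proj Q (f j) = 0].
  move=> j; have [j2r | _] := boolP (2 <= j <= r)%N; last by exists 0.
  have fj_lt : (f j < f j.-1)%MS by apply: f_ltmx; lia.
  by have [v v_spec] := exists_proj_orth HQ fj_lt; exists v.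
have K_join := join_param_join HQ f_ltmx f_lt1 w_spec.
have E_join := join_tail_join HQ f_ltmx f_lt1 w_spec.
have K_cont := @continuous_join_param R n r Q f w.
have E_cont := @continuous_join_tail R n r Q f w.
split.
- move=> x x' y y' k k' /Bset_annihilator Xx /Bset_annihilator Xx' Yy Yy' _ _.
  exact: join_inj K_join E_join x x' y y' k k' Xx Xx' Yy Yy'.
- move=> xs ys ks x y k XYs /Bset_annihilator Xx Yy _.
  apply: (join_inv_cvg K_join E_join K_cont E_cont) => // m.
  by have [/Bset_annihilator Xm Ym _] := XYs m.
Qed.
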